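(* Let $n\geq 1$ be an integer and let $a,b\in\mathbb{C}$. Then $$C_n^{(a,b)}=a\,M_{n-1}^{(a+b,\,ab)},\qquad b\,S_n^{(a,b)}=(a+b)\,C_n^{(b,\,a+b)},\qquad S_n^{(a,b)}=(a+b)\,M_{n-1}^{(a+2b,\,ab+b^2)},$$ where $C_n^{(a,b)}$, $S_n^{(a,b)}$, $M_m^{(a,b)}$ are the weighted Catalan, Schröder and Motzkin numbers defined in the context.
   Context: Let $C_k=\frac{1}{k+1}\binom{2k}{k}$ be the Catalan numbers. For $m\geq 0$ and $a,b\in\mathbb{C}$: (1) The $(a,b)$-Motzkin number is $M_m^{(a,b)}=\sum_{k=0}^{\lfloor m/2\rfloor}\binom{m}{2k}C_k a^{m-2k}b^k$ (total weight of Motzkin paths of order $m$ with steps $(0,2),(2,0),(1,1)$ staying weakly above $y=x$, each $(1,1)$ step weighted $a$ and each $(2,0)$ step weighted $b$). (2) For $n\geq 1$, the valley type $(a,b)$-Catalan number is $C_n^{(a,b)}=\sum_{k=0}^{n-1}\frac{1}{n}\binom{n}{k}\binom{n}{k+1}a^{n-k}b^k$ (total weight of Catalan paths from $(0,0)$ to $(n,n)$ with steps $\mathbf N=(0,1)$, $\mathbf E=(1,0)$ never going below $y=x$, where each $\mathbf E$ step immediately followed by an $\mathbf N$ step has weight $b$ and every other $\mathbf E$ step has weight $a$). (3) The $(a,b)$-Schröder number is $S_n^{(a,b)}=\sum_{k=0}^{n}\binom{n+k}{2k}C_k a^{n-k}b^k$ (total weight of Schröder paths from $(0,0)$ to $(n,n)$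 with steps $(0,1),(1,0),(1,1)$ never going below $y=x$, each $(1,1)$ step weighted $a$ and each $(1,0)$ step weighted $b$). *)

From mathcomp Require Import all_boot all_order all_algebra.
From mathcomp Require Import complex.
Set Implicit Arguments. Unset Strict Implicit. Unset Printing Implicit Defensive.
Import GRing.Theory Num.Theory.
Local Open Scope ring_scope.

Definition catalan (F : fieldType) (k : nat) : F :=
  (k.+1%:R)^-1 * ('C(k.*2, k))%:R.

Definition motzkin (F : fieldType) (m : nat) (a b : F) : F :=
  \sum_(0 <= k < (m./2).+1) ('C(m, k.*2))%:R * catalan F k * a ^+ (m - k.*2) * b ^+ k.

Definition catalanAB (F : fieldType) (n : nat) (a b : F) : F :=
  \sum_(0 <= k < n) (n%:R)^-1 * ('C(n, k))%:R * ('C(n, k.+1))%:R * a ^+ (n - k) * b ^+ k.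

Definition schroder (F : fieldType) (n : nat) (a b : F) : F :=
  \sum_(0 <= k < n.+1) ('C(n + k, k.*2))%:R * catalan F k * a ^+ (n - k) * b ^+ k.

From mathcomp Require Import all_boot all_order all_algebra.
From mathcomp Require Import complex ring zify.
Import GRing.Theory Num.Theory.

(* All three identities compare coefficients of the monomials a^i b^j.
   For the first, the Vandermonde convolution
   C(n, m+1) = sum_k C(m, k) C(n-m, k+1) splits the coefficient of
   a^(n-m) b^m on the Catalan side along k, and expanding (a+b)^(n-1-2k) in
   the Motzkin sum produces the same terms: both are
   (n-1)! / (k! (k+1)! j! (n-1-2k-j)!) with m = j + k.  For the second, the
   subset-of-a-subset identity C(n, k+1) C(k+1, j) = C(n, j) C(n-j, k+1-j)
   and Vandermonde sum the coefficients of (a+b) C_n^(b,a+b) to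
   (1/n) C(n, j) C(2n-j, n-1), which is the coefficient of a^j b^(n+1-j) in
   b S_n^(a,b).  The third follows from the other two, since
   b S_n^(a,b) = (a+b) C_n^(b,a+b) = (a+b) b M_(n-1)^(a+2b, b(a+b)), after
   cancelling b (the case b = 0 being immediate). *)

Lemma big_nat_widen_idx (R : Type) (idx : R) (op : Monoid.law idx) (G : nat -> R) n1 n2 :
  n1 <= n2 -> (forall i, n1 <= i -> G i = idx) ->
  \big[op/idx]_(0 <= i < n1) G i = \big[op/idx]_(0 <= i < n2) G i.
Proof.
move=> le_n12 G_idx; rewrite [RHS](@big_cat_nat _ _ _ n1) //=.
rewrite [X in op _ X]big1_seq ?Monoid.mulm1 // => i /andP[_].
by rewrite mem_index_iota => /andP[/G_idx].
Qed.

Lemma big_nat_shift (R : Type) (idx : R) (op : Monoid.law idx) (G : nat -> R) k n :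
  (forall m, m < k -> G m = idx) -> (forall m, n <= m -> G m = idx) ->
  \big[op/idx]_(0 <= m < n) G m = \big[op/idx]_(0 <= j < n) G (j + k).
Proof.
move=> G_lo G_hi; rewrite (@big_nat_widen_idx _ _ _ _ n (k + n)) ?leq_addl //.
rewrite (@big_cat_nat _ _ _ k) ?leq_addr //= [X in op X _]big1_seq ?Monoid.mul1m; last first.
  by move=> m /andP[_]; rewrite mem_index_iota => /andP[_ /G_lo].
by rewrite -{1}[k]add0n big_addn addKn.
Qed.

Lemma mul_bin_bin n m j : j <= m ->
  'C(n, m) * 'C(m, j) = 'C(n, j) * 'C(n - j, m - j).
Proof.
move=> le_jm; have [lt_nm | le_mn] := ltnP n m.
  rewrite (bin_small lt_nm) mul0n; have [le_jn | lt_nj] := leqP j n.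
    by rewrite (@bin_small (n - j)) ?muln0 //; lia.
  by rewrite (bin_small lt_nj).
apply/eqP; rewrite -(eqn_pmul2r (_ : 0 < j`! * ((m - j)`! * (n - m)`!))); last first.
  by rewrite !muln_gt0 !fact_gt0.
have sub_nj_mj : n - j - (m - j) = n - m by lia.
apply/eqP; transitivity n`!.
  by rewrite -(bin_fact le_mn) -(bin_fact le_jm); ring.
rewrite -(@bin_fact n j); last exact: leq_trans le_mn.
rewrite -(@bin_fact (n - j) (m - j)) ?leq_sub2r // sub_nj_mj; ring.
Qed.

Lemma sum_bin_mul_binS m p n : p <= n ->
  \sum_(0 <= k < n) 'C(m, k) * 'C(p, k.+1) = 'C(m + p, m.+1).
Proof.
case: p => [_ | p le_pn].
  by rewrite big1_seq ?addn0 ?bin_small // => k _; rewrite muln0.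
rewrite -(@big_nat_widen_idx _ _ _ _ p.+1) // => [|k lt_pk]; last first.
  by rewrite (@bin_small p.+1) ?muln0.
rewrite big_mkord (eq_bigr (fun k : 'I_p.+1 => 'C(m, k) * 'C(p.+1, p - k))).
  rewrite binomial.Vandermonde -bin_sub; [congr 'C(_, _) | ]; lia.
move=> [k /= lt_kp] _; rewrite -(@bin_sub p.+1 k.+1) //; congr (_ * 'C(_, _)); lia.
Qed.

Lemma sum_bin_mul_bin_mul_bin n j : 0 < n ->
  \sum_(0 <= k < n) 'C(n, k) * 'C(n, k.+1) * 'C(k.+1, j)
  = 'C(n, j) * 'C(n + (n - j), n.-1).
Proof.
move=> n_gt0; have [lt_nj | le_jn] := ltnP n j.
  rewrite bin_small // mul0n big1_seq // => k /andP[_].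
  by rewrite mem_index_iota => /andP[_ lt_kn]; rewrite (@bin_small k.+1) ?muln0 //; lia.
have binS_bin k : k < n -> 'C(n, k.+1) * 'C(k.+1, j) = 'C(n, j) * 'C(n - j, n.-1 - k).
  move=> lt_kn; have [le_jk | lt_kj] := leqP j k.+1.
    by rewrite mul_bin_bin // -(@bin_sub (n - j) (k.+1 - j)); [congr (_ * 'C(_, _)) | ]; lia.
  by rewrite (@bin_small k.+1) ?(@bin_small (n - j)) ?muln0 //; lia.
rewrite (eq_big_nat _ _ (F2 := fun k => 'C(n, j) * ('C(n, k) * 'C(n - j, n.-1 - k)))).
  rewrite -big_distrr /= big_mkord; congr (_ * _).
  by case: n n_gt0 {le_jn binS_bin} => // n _; rewrite binomial.Vandermonde.
by move=> k /andP[_ lt_kn]; rewrite -mulnA binS_bin // mulnCA.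
Qed.

Local Open Scope ring_scope.

Lemma exprDn_big_nat (R : comPzSemiRingType) (x y : R) n N : (n < N)%N ->
  (x + y) ^+ n = \sum_(0 <= i < N) 'C(n, i)%:R * (x ^+ (n - i) * y ^+ i).
Proof.
move=> lt_nN; rewrite exprDn -(@big_nat_widen_idx _ _ _ _ n.+1) // => [|i lt_ni].
  by rewrite big_mkord; apply: eq_bigr => i _; rewrite mulr_natl.
by rewrite bin_small // mul0r.
Qed.

Section CharacteristicZero.
Variable F : fieldType.
Hypothesis F_char0 : [pchar F] =i pred0.
Implicit Types a b : F.

Lemma natf_neq0 n : (0 < n)%N -> n%:R != 0 :> F.
Proof. by rewrite (pcharf0P F).1 // -lt0n. Qed.

Lemma natf_bin_fact n m : (m <= n)%N ->
  'C(n, m)%:R = n`!%:R / (m`!%:R * (n - m)`!%:R) :> F.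
Proof.
move=> le_mn; rewrite -(bin_fact le_mn) !natrM mulfK //.
by rewrite mulf_neq0 ?natf_neq0 ?fact_gt0.
Qed.

Lemma catalan_fact k : catalan F k = (k.*2)`!%:R / (k`!%:R * k.+1`!%:R).
Proof.
rewrite /catalan natf_bin_fact -?addnn ?leq_addr // addnK factS !natrM.
by field; rewrite -?natrD ?nat1r !natf_neq0 ?fact_gt0.
Qed.

Lemma catalanAB_motzkin_coef n k j : (k.*2 + j < n)%N ->
  n%:R^-1 * 'C(n, j + k)%:R * 'C(j + k, k)%:R * 'C(n - (j + k), k.+1)%:R
  = 'C(n.-1, k.*2)%:R * catalan F k * 'C(n.-1 - k.*2, j)%:R.
Proof.
move=> lt_n; have [q ->] : exists q, n = (k.*2 + j + q).+1.
  by exists (n - (k.*2 + j).+1)%N; lia.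
rewrite catalan_fact /= !natf_bin_fact; try lia.
have -> : ((k.*2 + j + q).+1 - (j + k) = (k + q).+1)%N by lia.
have -> : ((k + q).+1 - k.+1 = q)%N by lia.
have -> : (k.*2 + j + q - k.*2 = j + q)%N by lia.
rewrite addnK addKn !factS !natrM.
by field; rewrite -?natrD ?nat1r !natf_neq0 ?fact_gt0.
Qed.

Lemma schroder_catalanAB_coef n i : (0 < n)%N -> (i <= n)%N ->
  'C(n + i, i.*2)%:R * catalan F i = n%:R^-1 * 'C(n, n - i)%:R * 'C(n + i, n.-1)%:R.
Proof.
case: n => [//|n] _ le_in; rewrite catalan_fact /= !natf_bin_fact; try lia.
have -> : (n.+1 + i - n = i.+1)%N by lia.
have -> : (n.+1 + i - i.*2 = n.+1 - i)%N by lia.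
rewrite subKn // factS !natrM.
by field; rewrite -?natrD ?nat1r !natf_neq0 ?fact_gt0.
Qed.

Lemma catalanAB_expand n a b :
  catalanAB n a b = \sum_(0 <= k < n) \sum_(0 <= m < n)
    n%:R^-1 * 'C(n, m)%:R * 'C(m, k)%:R * 'C(n - m, k.+1)%:R * (a ^+ (n - m) * b ^+ m).
Proof.
rewrite /catalanAB exchange_big_nat /=; apply: eq_big_nat => m /andP[_ lt_mn].
have -> : 'C(n, m.+1) = (\sum_(0 <= k < n) 'C(m, k) * 'C(n - m, k.+1))%N.
  by rewrite sum_bin_mul_binS ?leq_subr // subnKC // ltnW.
rewrite natr_sum big_distrr !big_distrl /=.
by apply: eq_bigr => k _; rewrite natrM; ring.
Qed.

(* The exponent of [a] is left as it comes: with truncated subtraction it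
   equals [n - (j + k)] only when [k.*2 + j < n]. *)
Lemma mul_motzkin_expand n a b : (0 < n)%N ->
  a * motzkin n.-1 (a + b) (a * b) = \sum_(0 <= k < n) \sum_(0 <= j < n)
    'C(n.-1, k.*2)%:R * catalan F k * 'C(n.-1 - k.*2, j)%:R
    * (a ^+ (k.+1 + (n.-1 - k.*2 - j)) * b ^+ (j + k)).
Proof.
move=> n_gt0; rewrite /motzkin (@big_nat_widen_idx _ _ _ _ _ n) => [||k lt_k]; last 2 first.
- by rewrite ltn_half_double; lia.
- by rewrite bin_small ?mul0r // -ltn_half_double.
rewrite big_distrr; apply: eq_big_nat => k _ /=.
rewrite (@exprDn_big_nat _ _ _ _ n) ?big_distrr ?big_distrl /=; last by lia.
rewrite big_distrr; apply: eq_big_nat => j _ /=.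
by rewrite exprMn !exprD exprS; ring.
Qed.

Lemma catalanAB_motzkin n a b : (0 < n)%N ->
  catalanAB n a b = a * motzkin n.-1 (a + b) (a * b).
Proof.
move=> n_gt0; rewrite catalanAB_expand mul_motzkin_expand //.
apply: eq_big_nat => k _; rewrite (@big_nat_shift _ _ _ _ k) => [|m lt_mk|m le_nm]; first last.
- by rewrite (_ : n - m = 0)%N ?(@bin_small 0) ?mulr0 ?mul0r //; lia.
- by rewrite (@bin_small m) ?mulr0 ?mul0r.
apply: eq_big_nat => j _; have [lt_n | le_n] := ltnP (k.*2 + j) n.
  by rewrite catalanAB_motzkin_coef //; congr (_ * (a ^+ _ * _)); lia.
(* Outside the triangle [k.*2 + j < n] both coefficients vanish. *)
rewrite (@bin_small (n - (j + k))) ?mulr0 ?mul0r; last by lia.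
have [le_kn | lt_nk] := leqP k.*2 n.-1.
  by rewrite (@bin_small (n.-1 - k.*2)) ?mulr0 ?mul0r //; lia.
by rewrite (@bin_small n.-1) ?mul0r.
Qed.

Lemma mul_schroder_expand n a b : (0 < n)%N ->
  b * schroder n a b = \sum_(0 <= j < n.+1)
    n%:R^-1 * 'C(n, j)%:R * 'C(n + (n - j), n.-1)%:R * (a ^+ j * b ^+ (n.+1 - j)).
Proof.
move=> n_gt0; rewrite /schroder big_distrr big_nat_rev /=.
apply: eq_big_nat => j /andP[_ le_jn]; rewrite add0n subSS.
rewrite -mulrA schroder_catalanAB_coef ?leq_subr // subKn // subSn //.
by rewrite exprS; ring.
Qed.

Lemma mul_catalanAB_expand n a b :
  (a + b) * catalanAB n b (a + b) = \sum_(0 <= j < n.+1)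
    n%:R^-1 * (\sum_(0 <= k < n) 'C(n, k) * 'C(n, k.+1) * 'C(k.+1, j))%:R
    * (a ^+ j * b ^+ (n.+1 - j)).
Proof.
rewrite /catalanAB big_distrr /=.
under eq_big_nat => k /andP[_ lt_kn] do
  rewrite mulrCA -!mulrA -exprS (addrC a) (@exprDn_big_nat _ _ _ _ n.+1) // !big_distrr.
rewrite exchange_big_nat /=; apply: eq_big_nat => j _.
rewrite natr_sum !big_distrr big_distrl /=; apply: eq_big_nat => k /andP[_ lt_kn].
have [le_jk | lt_kj] := leqP j k.+1.
  rewrite (_ : n.+1 - j = n - k + (k.+1 - j))%N; last by lia.
  by rewrite exprD !natrM; ring.
by rewrite (@bin_small k.+1) // muln0 !(mul0r, mulr0).
Qed.

Lemma schroder_catalanAB n a b : (0 < n)%N ->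
  b * schroder n a b = (a + b) * catalanAB n b (a + b).
Proof.
move=> n_gt0; rewrite mul_schroder_expand // mul_catalanAB_expand.
by apply: eq_big_nat => j _; rewrite sum_bin_mul_bin_mul_bin // natrM !mulrA.
Qed.

Lemma catalan0 : catalan F 0 = 1.
Proof. by rewrite /catalan bin0 invr1 mul1r. Qed.

Lemma schroder_b0 n a : schroder n a 0 = a ^+ n.
Proof.
rewrite /schroder big_ltn // big1_seq ?addr0 => [|[|k] /andP[_]]; last 2 first.
- by rewrite mem_index_iota.
- by rewrite expr0n mulr0.
by rewrite bin0 catalan0 subn0 !mulr1 mul1r.
Qed.

Lemma motzkin_b0 m a : motzkin m a 0 = a ^+ m.
Proof.
rewrite /motzkin big_ltn // big1_seq ?addr0 => [|[|k] /andP[_]]; last 2 first.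
- by rewrite mem_index_iota.
- by rewrite expr0n mulr0.
by rewrite bin0 catalan0 subn0 !mulr1 mul1r.
Qed.

Lemma schroder_motzkin n a b : (0 < n)%N ->
  schroder n a b = (a + b) * motzkin n.-1 (a + 2%:R * b) (a * b + b ^+ 2).
Proof.
move=> n_gt0.
have -> : a + 2%:R * b = b + (a + b) by rewrite mulr2n mulrDl mul1r addrCA addrA.
have -> : a * b + b ^+ 2 = b * (a + b) by rewrite mulrDr expr2 mulrC.
have [-> | b_neq0] := eqVneq b 0.
  by rewrite schroder_b0 !(add0r, addr0, mul0r) motzkin_b0 -exprS prednK.
by apply: (mulfI b_neq0); rewrite schroder_catalanAB // catalanAB_motzkin // mulrCA.
Qed.

End CharacteristicZero.

Theorem theorem1p3 (R : rcfType) (n : nat) (a b : R[i]) :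
  (1 <= n)%N ->
  [/\ catalanAB n a b = a * motzkin n.-1 (a + b) (a * b),
      b * schroder n a b = (a + b) * catalanAB n b (a + b) &
      schroder n a b = (a + b) * motzkin n.-1 (a + 2%:R * b) (a * b + b ^+ 2)].
Proof.
move=> n_gt0; have char0 := @pchar_num R[i].
split; [exact: (@catalanAB_motzkin _ char0) | exact: (@schroder_catalanAB _ char0)
       | exact: (@schroder_motzkin _ char0)].
Qed.
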